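(* Let $n\ge 1$ and let $A = \begin{bmatrix} 0_n & I_n \\ 0_n & 0_n \end{bmatrix}$, $C = \begin{bmatrix} I_n & 0_n \end{bmatrix}$, $E = \begin{bmatrix} 0_n \\ I_n \end{bmatrix}$. Let $\kappa,\gamma>0$, and suppose $P\in\mathbb{R}^{2n\times 2n}$ is symmetric positive definite and $W\in\mathbb{R}^{2n\times n}$ is such that $$\begin{bmatrix} \Lambda & PE \\ E^\top P & -\gamma^2 I_n\end{bmatrix} < 0,\qquad \Lambda = P(\kappa I_{2n}+A) + (\kappa I_{2n}+A)^\top P + I_{2n} - WC - C^\top W^\top.$$ Partition $P = \begin{bmatrix} P_{11} & P_{12} \\ P_{12}^\top & P_{22}\end{bmatrix}$ with $P_{11},P_{12},P_{22}\in\mathbb{R}^{n\times n}$. Then $P_{11}>0$, $P_{22}>0$, and $P_{12}$ is non-singular and Hurwitz.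
   Context: $>0$ / $<0$ for symmetric matrices denote positive / negative definiteness. A square matrix is Hurwitz if all its eigenvalues have strictly negative real part. *)

(* matrices over an abstract real closed field R (covers the reals);
   eigenvalues live in the algebraic closure R[i] (mathcomp-real-closed complex). *)
From HB Require Import structures.
From mathcomp Require Import all_boot all_order all_algebra.
From mathcomp Require Import complex.
Set Implicit Arguments. Unset Strict Implicit. Unset Printing Implicit Defensive.
Import Order.TTheory GRing.Theory Num.Theory.
Local Open Scope ring_scope.

Definition posdef (R : realFieldType) (m : nat) (M : 'M[R]_m) : Prop :=
  M^T = M /\ forall x : 'cV[R]_m, x != 0 -> 0 < (x^T *m M *m x) 0 0.

Definition negdef (R : realFieldType) (m : nat) (M : 'M[R]_m) : Prop :=
  M^T = M /\ forall x : 'cV[R]_m, x != 0 -> (x^T *m M *m x) 0 0 < 0.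

Definition eigenvalueC (R : rcfType) (m : nat) (M : 'M[R]_m) (z : R[i]) : Prop :=
  root (char_poly (map_mx (fun x : R => (x%:C)%C) M)) z.

Definition hurwitz (R : rcfType) (m : nat) (M : 'M[R]_m) : Prop :=
  forall z : R[i], eigenvalueC M z -> complex.Re z < 0.

Definition Amat (R : rcfType) (n : nat) : 'M[R]_(n + n) :=
  block_mx 0 1%:M 0 0.
Definition Cmat (R : rcfType) (n : nat) : 'M[R]_(n, n + n) := row_mx 1%:M 0.
Definition Emat (R : rcfType) (n : nat) : 'M[R]_(n + n, n) := col_mx 0 1%:M.

Definition Lambda (R : rcfType) (n : nat) (kappa : R) (P : 'M[R]_(n + n))
    (W : 'M[R]_(n + n, n)) : 'M[R]_(n + n) :=
  P *m (kappa%:M + Amat R n) + (kappa%:M + Amat R n)^T *m P + 1%:M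
  - W *m Cmat R n - (Cmat R n)^T *m W^T.

Definition LMI (R : rcfType) (n : nat) (kappa gamma : R) (P : 'M[R]_(n + n))
    (W : 'M[R]_(n + n, n)) : 'M[R]_(n + n + n) :=
  block_mx (Lambda kappa P W) (P *m Emat R n)
           ((Emat R n)^T *m P) (- (gamma ^+ 2)%:M).

From HB Require Import structures.
From mathcomp Require Import all_boot all_order all_algebra.
From mathcomp Require Import complex.
Import Order.TTheory GRing.Theory Num.Theory.
Local Open Scope ring_scope.

(* Testing the LMI against the vectors (0, x, 0) only sees the block Lambda,
   where C kills (0, x) and kappa I + A maps it to (x, kappa x); this gives
   x^T (2 kappa P22 + P12 + P12^T + I) x < 0, so the symmetric part of P12 is
   negative definite since P22 is positive definite.  A matrix M with
   M + M^T < 0 has trivial kernel, and for a left eigenpair v M = z v, writing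
   v = a + i b gives a M a^T + b M b^T = Re z (|a|^2 + |b|^2) < 0, which forces
   Re z < 0.  P11 and P22 are positive definite as principal blocks of P. *)

Section BlockForms.
Context {R : pzRingType}.

Lemma bilinear_block_mx m1 m2 (M : 'M[R]_(m1 + m2))
    (x1 y1 : 'cV_m1) (x2 y2 : 'cV_m2) :
  (col_mx x1 x2)^T *m M *m col_mx y1 y2 =
  x1^T *m ulsubmx M *m y1 + x2^T *m dlsubmx M *m y1
  + (x1^T *m ursubmx M *m y2 + x2^T *m drsubmx M *m y2).
Proof. by rewrite -{1}(submxK M) tr_col_mx mul_row_block mul_row_col !mulmxDl. Qed.

Lemma quadform_col_mx0 m1 m2 (M : 'M[R]_(m1 + m2)) (x : 'cV_m1) :
  (col_mx x 0)^T *m M *m col_mx x 0 = x^T *m ulsubmx M *m x.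
Proof. by rewrite bilinear_block_mx trmx0 !mul0mx !mulmx0 !addr0. Qed.

Lemma quadform_col_0mx m1 m2 (M : 'M[R]_(m1 + m2)) (x : 'cV_m2) :
  (col_mx 0 x)^T *m M *m col_mx 0 x = x^T *m drsubmx M *m x.
Proof. by rewrite bilinear_block_mx trmx0 !mul0mx !mulmx0 !add0r. Qed.

End BlockForms.

Section DefiniteBlocks.
Context {R : realFieldType} {m1 m2 : nat}.
Implicit Type M : 'M[R]_(m1 + m2).

Lemma posdef_ulsubmx M : posdef M -> posdef (ulsubmx M).
Proof.
move=> [Msym Mpos]; split=> [|x x0]; first by rewrite trmx_ulsub Msym.
by rewrite -quadform_col_mx0 Mpos // col_mx_eq0 negb_and x0.
Qed.

Lemma posdef_drsubmx M : posdef M -> posdef (drsubmx M).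
Proof.
move=> [Msym Mpos]; split=> [|x x0]; first by rewrite trmx_drsub Msym.
by rewrite -quadform_col_0mx Mpos // col_mx_eq0 negb_and x0 orbT.
Qed.

Lemma negdef_ulsubmx M : negdef M -> negdef (ulsubmx M).
Proof.
move=> [Msym Mneg]; split=> [|x x0]; first by rewrite trmx_ulsub Msym.
by rewrite -quadform_col_mx0 Mneg // col_mx_eq0 negb_and x0.
Qed.

End DefiniteBlocks.

Section NegdefSymmetricPart.
Context {R : realFieldType} {n : nat}.
Implicit Type M : 'M[R]_n.

Lemma dotmx_ge0 (a : 'rV[R]_n) : 0 <= (a *m a^T) 0 0.
Proof. by rewrite mxE sumr_ge0 // => i _; rewrite mxE -expr2 sqr_ge0. Qed.

Lemma negdef_sym_row M :
  negdef (M + M^T) -> forall a : 'rV_n, a != 0 -> (a *m M *m a^T) 0 0 < 0.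
Proof.
move=> [_ Mneg] a a0; have := Mneg a^T; rewrite trmx_eq0 trmxK => /(_ a0).
rewrite mulmxDr mulmxDl mxE.
have -> : (a *m M^T *m a^T) 0 0 = (a *m M *m a^T) 0 0.
  by rewrite -[a *m M^T *m a^T]trmxK mxE !trmx_mul !trmxK mulmxA.
by rewrite -mulr2n pmulrn_llt0.
Qed.

Lemma negdef_sym_unitmx M : negdef (M + M^T) -> M \in unitmx.
Proof.
move=> /negdef_sym_row Mneg; rewrite -row_free_unit.
apply/inj_row_free => v vM0; apply/eqP; apply: contraT => /Mneg.
by rewrite vM0 mul0mx mxE ltxx.
Qed.

End NegdefSymmetricPart.

Section RealAndImaginaryParts.
Context {R : rcfType}.
Local Notation Re := (@complex.Re R).
Local Notation Im := (@complex.Im R).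
Local Notation toC := (fun x : R => (x%:C)%C).

Lemma map_Re_mul_real m n p (v : 'M[R[i]]_(m, n)) (M : 'M[R]_(n, p)) :
  map_mx Re (v *m map_mx toC M) = map_mx Re v *m M.
Proof.
apply/matrixP => i j; rewrite !mxE (linear_sum (Re : Rcomplex R -> R)).
apply: eq_bigr => k _; rewrite !mxE.
by case: (v i k) => a b /=; rewrite mulr0 subr0.
Qed.

Lemma map_Im_mul_real m n p (v : 'M[R[i]]_(m, n)) (M : 'M[R]_(n, p)) :
  map_mx Im (v *m map_mx toC M) = map_mx Im v *m M.
Proof.
apply/matrixP => i j; rewrite !mxE (linear_sum (Im : Rcomplex R -> R)).
apply: eq_bigr => k _; rewrite !mxE.
by case: (v i k) => a b /=; rewrite mulr0 add0r.
Qed.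

Lemma map_Re_scale m n (z : R[i]) (v : 'M[R[i]]_(m, n)) :
  map_mx Re (z *: v) = Re z *: map_mx Re v - Im z *: map_mx Im v.
Proof. by apply/matrixP => i j; rewrite !mxE; case: z; case: (v i j). Qed.

Lemma map_Im_scale m n (z : R[i]) (v : 'M[R[i]]_(m, n)) :
  map_mx Im (z *: v) = Re z *: map_mx Im v + Im z *: map_mx Re v.
Proof.
apply/matrixP => i j; rewrite !mxE.
by case: z; case: (v i j) => a b c d /=; rewrite addrC.
Qed.

Lemma map_ReIm_eq0 m n (v : 'M[R[i]]_(m, n)) :
  (map_mx Re v == 0) && (map_mx Im v == 0) = (v == 0).
Proof.
apply/andP/eqP => [[/eqP vRe /eqP vIm]|->]; last by rewrite !map_mx0 !eqxx.
apply/matrixP => i j; move/matrixP/(_ i j): vRe; move/matrixP/(_ i j): vIm.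
by rewrite !mxE; case: (v i j) => a b /= -> ->.
Qed.

Lemma negdef_sym_hurwitz n (M : 'M[R]_n) : negdef (M + M^T) -> hurwitz M.
Proof.
move=> /negdef_sym_row Mneg z; rewrite /eigenvalueC -eigenvalue_root_char.
case/eigenvalueP => v vM v0.
set a := map_mx Re v; set b := map_mx Im v.
have aM : a *m M = Re z *: a - Im z *: b.
  by rewrite -map_Re_mul_real vM map_Re_scale.
have bM : b *m M = Re z *: b + Im z *: a.
  by rewrite -map_Im_mul_real vM map_Im_scale.
have ba : b *m a^T = a *m b^T.
  by rewrite [LHS]mx11_scalar -tr_scalar_mx -mx11_scalar trmx_mul trmxK.
have sum_forms : a *m M *m a^T + b *m M *m b^T = Re z *: (a *m a^T + b *m b^T).
  rewrite aM bM mulmxBl mulmxDl -!scalemxAl ba scalerDr addrACA.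
  by rewrite addNr addr0.
move/(congr1 (fun A : 'M[R]_1 => A 0 0)): sum_forms.
rewrite [(_ + _ : 'M[R]_1) 0 0]mxE [(_ *: _ : 'M[R]_1) 0 0]mxE.
rewrite [(_ + _ : 'M[R]_1) 0 0]mxE => sum_forms.
have form_le0 (c : 'rV_n) : (c *m M *m c^T) 0 0 <= 0.
  by have [->|/Mneg/ltW//] := eqVneq c 0; rewrite !mul0mx mxE.
have sum_lt0 : (a *m M *m a^T) 0 0 + (b *m M *m b^T) 0 0 < 0.
  move: v0; rewrite -map_ReIm_eq0 negb_and => /orP[/Mneg aneg | /Mneg bneg].
    by rewrite ltr_wnDr ?form_le0.
  by rewrite ltr_wnDl ?form_le0.
apply: contraTT sum_lt0; rewrite -!leNgt sum_forms => Rez_ge0.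
by rewrite mulr_ge0 // addr_ge0 // dotmx_ge0.
Qed.

End RealAndImaginaryParts.

Lemma Lambda_quadform_col_0mx (R : rcfType) n (kappa : R) (P : 'M[R]_(n + n))
    (W : 'M[R]_(n + n, n)) (x : 'cV_n) :
  (col_mx 0 x)^T *m Lambda kappa P W *m col_mx 0 x
  = x^T *m (ursubmx P + dlsubmx P + ((kappa *+ 2) *: drsubmx P + 1%:M)) *m x.
Proof.
set y := col_mx 0 x; set K := kappa%:M + Amat R n.
have Cy : Cmat R n *m y = 0 by rewrite mul_row_col mul0mx mulmx0 addr0.
have Ky : K *m y = col_mx x (kappa *: x).
  rewrite mulmxDl mul_scalar_mx mul_block_col !mul0mx mul1mx !add0r.
  by rewrite scale_col_mx scaler0 add_col_mx addr0 add0r.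
have WCy : y^T *m (W *m Cmat R n) *m y = 0 by rewrite -!mulmxA Cy !mulmx0.
have CWy : y^T *m ((Cmat R n)^T *m W^T) *m y = 0.
  by rewrite mulmxA -trmx_mul Cy trmx0 !mul0mx.
rewrite /Lambda -/K; clearbody K.
rewrite !(mulmxDr, mulmxDl, mulmxN, mulNmx) WCy CWy !subr0.
rewrite [y^T *m (P *m K)]mulmxA -mulmxA Ky.
rewrite [y^T *m (K^T *m P)]mulmxA -trmx_mul Ky.
rewrite !mulmx1 !bilinear_block_mx tr_col_mx mul_row_col trmx0.
rewrite !mul0mx !mulmx0 !add0r [(kappa *: x)^T]linearZ /=.
rewrite -!scalemxAr -!scalemxAl -scalerMnl mulr2n.
by rewrite addrACA [_ + x^T *m ursubmx P *m x]addrC !addrA.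
Qed.

Lemma negdef_LMI_sym_ursubmx (R : rcfType) n (kappa gamma : R)
    (P : 'M[R]_(n + n)) (W : 'M[R]_(n + n, n)) :
  0 < kappa -> posdef P -> negdef (LMI kappa gamma P W) ->
  negdef (ursubmx P + (ursubmx P)^T).
Proof.
move=> kappa_gt0 Ppos /negdef_ulsubmx; rewrite block_mxKul => -[_ Lneg].
have [Psym _] := Ppos.
have [_ P22pos] : posdef (drsubmx P) by apply: posdef_drsubmx.
split=> [|x x0]; first by rewrite linearD /= trmxK addrC.
have := Lneg (col_mx 0 x); rewrite col_mx_eq0 negb_and x0 orbT => /(_ isT).
have P21 : dlsubmx P = (ursubmx P)^T by rewrite trmx_ursub Psym.
rewrite Lambda_quadform_col_0mx P21 mulmxDr mulmxDl mxE; apply: le_lt_trans.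
rewrite lerDl mulmxDr mulmxDl mxE -scalemxAr -scalemxAl mxE mulmx1.
apply: addr_ge0; first by rewrite mulr_ge0 ?mulrn_wge0 ?ltW ?P22pos.
by have := dotmx_ge0 x^T; rewrite trmxK.
Qed.

Theorem corollary1 (R : rcfType) (n : nat) (kappa gamma : R)
    (P : 'M[R]_(n + n)) (W : 'M[R]_(n + n, n)) :
  (0 < n)%N -> 0 < kappa -> 0 < gamma ->
  posdef P -> negdef (LMI kappa gamma P W) ->
  posdef (ulsubmx P) /\ posdef (drsubmx P) /\
  ursubmx P \in unitmx /\ hurwitz (ursubmx P).
Proof.
move=> _ kappa_gt0 _ Ppos LMIneg.
have P12neg : negdef (ursubmx P + (ursubmx P)^T).
  exact: negdef_LMI_sym_ursubmx kappa_gt0 Ppos LMIneg.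
split; first exact: posdef_ulsubmx.
split; first exact: posdef_drsubmx.
by split; [exact: negdef_sym_unitmx | exact: negdef_sym_hurwitz].
Qed.
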